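(* For all networks $M,N,O$ of pTCWS and $p,q\in[0,1]$: if $M\sqsubseteq_p N$ and $N\sqsubseteq_q O$ then $M\sqsubseteq_r O$ with $r=\min(1,p+q)$.
   Context: The process calculus pTCWS. Processes $P,Q$ and probabilistic choices $C,D$ are $P ::= \mathsf{nil} \mid {!}\langle u\rangle.C \mid \lfloor ?(x).C\rfloor D \mid \tau.C \mid \sigma.C \mid X \mid \mathsf{fix}\,X.P$ and $C ::= \bigoplus_{i\in I} p_i{:}P_i$ ($I$ finite non-empty, $p_i\in(0,1]$, $\sum_i p_i=1$); in $\mathsf{fix}\,X.P$ every occurrence of $X$ is time-guarded. $1{:}P$ is written $P$; ${!}\langle v\rangle$ is ${!}\langle v\rangle.\mathsf{nil}$. Networks: $M::=\mathbf 0\mid M_1\mid M_2\mid n[P]^\nu\mid\bot$, where $n[P]^\nu$ is a node named $n$ running closed process $P$ with neighbour set $\nu$, and $\bot$ is a stuck network; $\mathrm{nds}(M)$ is the set of node names. Structural congruence $\equiv$: least equivalence preserved by $\mid$, making $\mid$ a commutative monoid with unit $\mathbf 0$, with $n[\mathsf{fix}\,X.P]^\nu\equiv n[P\{\mathsf{fix}\,X.P/X\}]^\nu$. Networks are assumed well-formed. $\mathrm{rcv}(P)$ holds iff $n[P]^\nu\equiv n[\lfloor ?(x).C\rfloor D]^\nu$ for some $x,C,D$. Semantics: finite-support (sub-)distributions on networks, $|\Delta|$ total mass, $\overline M$ Dirac; $[\![n[\bigoplus_i p_i{:}P_i]^\nu]\!]=\sum_ip_i\overline{n[P_i]^\nu}$;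 $(\Delta\mid\Theta)(M_1\mid M_2)=\Delta(M_1)\Theta(M_2)$. Transitions $M\xrightarrow{\lambda}\Delta$, $\lambda\in\{m!v\triangleright\nu, m?v,\tau,\sigma\}$, form the least relation closed under: (Snd) $m[{!}\langle v\rangle.C]^\nu\xrightarrow{m!v\triangleright\nu}[\![m[C]^\nu]\!]$; (Rcv) if $m\in\nu$: $n[\lfloor ?(x).C\rfloor D]^\nu\xrightarrow{m?v}[\![n[C\{v/x\}]^\nu]\!]$; $\mathbf 0\xrightarrow{m?v}\overline{\mathbf 0}$; (RcvEnb) if $\neg(m\in\nu\wedge\mathrm{rcv}(P))$ and $m\ne n$: $n[P]^\nu\xrightarrow{m?v}\overline{n[P]^\nu}$; (RcvPar) $M\xrightarrow{m?v}\Delta$, $N\xrightarrow{m?v}\Theta$ give $M\mid N\xrightarrow{m?v}\Delta\mid\Theta$; (Bcast) $M\xrightarrow{m!v\triangleright\nu}\Delta$, $N\xrightarrow{m?v}\Theta$ give $M\mid N\xrightarrow{m!v\triangleright(\nu\setminus\mathrm{nds}(N))}\Delta\mid\Theta$ (and symmetrically); (Tau) $m[\tau.C]^\nu\xrightarrow{\tau}[\![m[C]^\nu]\!]$; (TauPar) $M\xrightarrow{\tau}\Delta$ and $N$ not of the form $\bot\mid N'$ give $M\mid N\xrightarrow{\tau}\Delta\mid\overline N$ (and symmetrically); $\mathbf 0\xrightarrow{\sigma}\overline{\mathbf 0}$; $n[\mathsf{nil}]^\nu\xrightarrow{\sigma}\overline{n[\mathsf{nil}]^\nu}$; (Timeout)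 $n[\lfloor ?(x).C\rfloor D]^\nu\xrightarrow{\sigma}[\![n[D]^\nu]\!]$; (Sleep) $n[\sigma.C]^\nu\xrightarrow{\sigma}[\![n[C]^\nu]\!]$; ($\sigma$-Par) $M\xrightarrow{\sigma}\Delta$, $N\xrightarrow{\sigma}\Theta$ give $M\mid N\xrightarrow{\sigma}\Delta\mid\Theta$; (Rec) $n[P\{\mathsf{fix}\,X.P/X\}]^\nu\xrightarrow{\lambda}\Delta$ gives $n[\mathsf{fix}\,X.P]^\nu\xrightarrow{\lambda}\Delta$; (ShhSnd) $M\xrightarrow{m!v\triangleright\emptyset}\Delta$ gives $M\xrightarrow{\tau}\Delta$; (ObsSnd) $M\xrightarrow{m!v\triangleright\nu}\Delta$ with $\nu\ne\emptyset$ gives $M\xrightarrow{!v\triangleright\nu}\Delta$. $\bot$ has no transitions. $\alpha$ ranges over $!v\triangleright\nu$, $m?v$, $\sigma$, $\tau$. Weak transitions: $M\xrightarrow{\hat\tau}\Delta$ iff $M\xrightarrow{\tau}\Delta$ or $\Delta=\overline M$; for $\alpha\ne\tau$, $\xrightarrow{\hat\alpha}=\xrightarrow{\alpha}$. For $\Delta=\sum_{i\in I}p_i\overline{M_i}$, $\Delta\xrightarrow{\hat\alpha}\Theta$ iff for some non-empty $J\subseteq I$, $M_j\xrightarrow{\hat\alpha}\Theta_j$ ($j\in J$), $M_i$ has no $\hat\alpha$-transition ($i\notin J$), and $\Theta=\sum_{j\in J}p_j\Theta_j$. $\overset{\hat\tau}{\Longrightarrow}$ is the reflexive-transitive closure of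 $\xrightarrow{\hat\tau}$; $\overset{\hat\alpha}{\Longrightarrow}=\overset{\hat\tau}{\Longrightarrow}\xrightarrow{\hat\alpha}\overset{\hat\tau}{\Longrightarrow}$ for $\alpha\neq\tau$. A pseudoquasimetric is $d:\mathcal N\times\mathcal N\to[0,1]$ with $d(M,M)=0$ and the triangle inequality. $\Omega(\Delta,\Theta)$ is the set of matchings (distributions on pairs with marginals $\Delta,\Theta$); $\mathcal K(d)(\Delta,\Theta)=\min_{\omega\in\Omega(\Delta,\Theta)}\sum\omega(M,N)d(M,N)$. A weak simulation quasimetric is a pseudoquasimetric $d$ such that whenever $d(M,N)<1$ and $M\xrightarrow{\alpha}\Delta$ there is $\Theta$ with $N\overset{\hat\alpha}{\Longrightarrow}\Theta$ and $\mathcal K(d)(\Delta,\Theta+(1-|\Theta|)\overline\bot)\le d(M,N)$. $\mathbf m$ denotes the least weak simulation quasimetric (pointwise below all others; it exists), and $M\sqsubseteq_pN$ iff $\mathbf m(M,N)\le p$. *)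

From Stdlib Require Import Reals List Arith Classical ClassicalEpsilon FunctionalExtensionality.
Import ListNotations.
Open Scope R_scope.

Definition name := nat.
Definition value := nat.
Definition var := nat.
Definition pvar := nat.

Inductive term : Type :=
| TVal (v : value)
| TVar (x : var).

Fixpoint rsum (k : nat) (f : nat -> R) : R :=
  match k with
  | O => 0
  | S k' => rsum k' f + f k'
  end.

(* side conditions of a probabilistic choice  (+)_{i<k} p_i : P_i *)
Definition choice_ok (k : nat) (p : nat -> R) : Prop :=
  (0 < k)%nat /\ (forall i, (i < k)%nat -> 0 < p i <= 1) /\ rsum k p = 1.

Inductive proc : Type :=
| PNil
| PSnd (u : term) (C : choice)
| PRcv (x : var) (C : choice) (D : choice)     (* |_ ?(x).C _| D, x bound in C *)
| PTau (C : choice)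
| PSleep (C : choice)
| PVar (X : pvar)
| PFix (X : pvar) (P : proc)
with choice : Type :=
(* (+)_{i in I} p_i : P_i with I = {0,...,k-1} *)
| Choice (k : nat) (p : nat -> R) (P : nat -> proc) (H : choice_ok k p).

Inductive net : Type :=
| NZero
| NPar (M N : net)
| NNode (n : name) (P : proc) (nu : list name)
| NBot.

Fixpoint nds (M : net) : list name :=
  match M with
  | NZero => []
  | NPar M1 M2 => nds M1 ++ nds M2
  | NNode n _ _ => [n]
  | NBot => []
  end.

Definition tsubst (v : value) (x : var) (u : term) : term :=
  match u with
  | TVal w => TVal w
  | TVar y => if Nat.eqb y x then TVal v else TVar y
  end.

Fixpoint vsubst (v : value) (x : var) (P : proc) : proc :=
  match P with
  | PNil => PNil
  | PSnd u C => PSnd (tsubst v x u) (vsubst_c v x C)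
  | PRcv y C D => PRcv y (if Nat.eqb y x then C else vsubst_c v x C) (vsubst_c v x D)
  | PTau C => PTau (vsubst_c v x C)
  | PSleep C => PSleep (vsubst_c v x C)
  | PVar X => PVar X
  | PFix X Q => PFix X (vsubst v x Q)
  end
with vsubst_c (v : value) (x : var) (C : choice) : choice :=
  match C with
  | Choice k p P H => Choice k p (fun i => vsubst v x (P i)) H
  end.

Fixpoint psubst (Q : proc) (X : pvar) (P : proc) : proc :=
  match P with
  | PNil => PNil
  | PSnd u C => PSnd u (psubst_c Q X C)
  | PRcv y C D => PRcv y (psubst_c Q X C) (psubst_c Q X D)
  | PTau C => PTau (psubst_c Q X C)
  | PSleep C => PSleep (psubst_c Q X C)
  | PVar Y => if Nat.eqb Y X then Q else PVar Y
  | PFix Y P' => if Nat.eqb Y X then PFix Y P' else PFix Y (psubst Q X P')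
  end
with psubst_c (Q : proc) (X : pvar) (C : choice) : choice :=
  match C with
  | Choice k p P H => Choice k p (fun i => psubst Q X (P i)) H
  end.

Definition unfold (X : pvar) (P : proc) : proc := psubst (PFix X P) X P.

Inductive scong : net -> net -> Prop :=
| sc_refl M : scong M M
| sc_sym M N : scong M N -> scong N M
| sc_trans M N O : scong M N -> scong N O -> scong M O
| sc_par M M' N N' : scong M M' -> scong N N' -> scong (NPar M N) (NPar M' N')
| sc_comm M N : scong (NPar M N) (NPar N M)
| sc_assoc M N O : scong (NPar (NPar M N) O) (NPar M (NPar N O))
| sc_unit M : scong (NPar M NZero) M
| sc_fix n X P nu : scong (NNode n (PFix X P) nu) (NNode n (unfold X P) nu).

(* rcv(P), relative to the node n[P]^nu in which it is evaluated *)
Definition rcv (n : name) (nu : list name) (P : proc) : Prop :=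
  exists x C D, scong (NNode n P nu) (NNode n (PRcv x C D) nu).

(* N is of the form bottom | N' (up to structural congruence) *)
Fixpoint has_bot (N : net) : Prop :=
  match N with
  | NBot => True
  | NPar N1 N2 => has_bot N1 \/ has_bot N2
  | _ => False
  end.

Definition dist := net -> R.

Definition dirac (M : net) : dist :=
  fun M' => if excluded_middle_informative (M' = M) then 1 else 0.

Definition dzero : dist := fun _ => 0.
Definition dadd (D1 D2 : dist) : dist := fun M => D1 M + D2 M.
Definition dscale (p : R) (D : dist) : dist := fun M => p * D M.
Fixpoint dsum (l : list dist) : dist :=
  match l with [] => dzero | D :: l' => dadd D (dsum l') end.
Fixpoint dsumn (k : nat) (f : nat -> dist) : dist :=
  match k with O => dzero | S k' => dadd (dsumn k' f) (f k') end.

Definition dprod (D1 D2 : dist) : dist :=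
  fun M => match M with NPar M1 M2 => D1 M1 * D2 M2 | _ => 0 end.

Definition sem (n : name) (C : choice) (nu : list name) : dist :=
  match C with
  | Choice k p P _ => dsumn k (fun i => dscale (p i) (dirac (NNode n (P i) nu)))
  end.

Definition nset := name -> Prop.
Definition nset_of (l : list name) : nset := fun x => In x l.

Inductive act : Type :=
| ABang (m : name) (v : value) (nu : nset)
| ARcv (m : name) (v : value)
| ATau
| ASigma
| AOut (v : value) (nu : nset).

Inductive trans : net -> act -> dist -> Prop :=
| t_snd m v C nu :
    trans (NNode m (PSnd (TVal v) C) nu) (ABang m v (nset_of nu)) (sem m C nu)
| t_rcv m n x C D nu v :
    In m nu ->
    trans (NNode n (PRcv x C D) nu) (ARcv m v) (sem n (vsubst_c v x C) nu)
| t_rcv0 m v : trans NZero (ARcv m v) (dirac NZero)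
| t_rcvenb m n P nu v :
    ~ (In m nu /\ rcv n nu P) -> m <> n ->
    trans (NNode n P nu) (ARcv m v) (dirac (NNode n P nu))
| t_rcvpar M N m v D1 D2 :
    trans M (ARcv m v) D1 -> trans N (ARcv m v) D2 ->
    trans (NPar M N) (ARcv m v) (dprod D1 D2)
| t_bcastl M N m v nu D1 D2 :
    trans M (ABang m v nu) D1 -> trans N (ARcv m v) D2 ->
    trans (NPar M N) (ABang m v (fun x => nu x /\ ~ In x (nds N))) (dprod D1 D2)
| t_bcastr M N m v nu D1 D2 :
    trans M (ABang m v nu) D1 -> trans N (ARcv m v) D2 ->
    trans (NPar N M) (ABang m v (fun x => nu x /\ ~ In x (nds N))) (dprod D2 D1)
| t_tau m C nu : trans (NNode m (PTau C) nu) ATau (sem m C nu)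
| t_taupar_l M N D : trans M ATau D -> ~ has_bot N ->
    trans (NPar M N) ATau (dprod D (dirac N))
| t_taupar_r M N D : trans M ATau D -> ~ has_bot N ->
    trans (NPar N M) ATau (dprod (dirac N) D)
| t_sigma0 : trans NZero ASigma (dirac NZero)
| t_sigmanil n nu : trans (NNode n PNil nu) ASigma (dirac (NNode n PNil nu))
| t_timeout n x C D nu : trans (NNode n (PRcv x C D) nu) ASigma (sem n D nu)
| t_sleep n C nu : trans (NNode n (PSleep C) nu) ASigma (sem n C nu)
| t_sigmapar M N D1 D2 : trans M ASigma D1 -> trans N ASigma D2 ->
    trans (NPar M N) ASigma (dprod D1 D2)
| t_rec n X P nu l D : trans (NNode n (unfold X P) nu) l D ->
    trans (NNode n (PFix X P) nu) l D
| t_shhsnd M m v nu D : trans M (ABang m v nu) D -> (forall x, ~ nu x) ->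
    trans M ATau D
| t_obssnd M m v nu D : trans M (ABang m v nu) D -> (exists x, nu x) ->
    trans M (AOut v nu) D.

(* alpha ranges over !v|>nu, m?v, sigma, tau *)
Definition is_alpha (a : act) : Prop :=
  match a with ABang _ _ _ => False | _ => True end.

Definition hat_step (a : act) (M : net) (D : dist) : Prop :=
  (a = ATau /\ (trans M ATau D \/ D = dirac M)) \/ (a <> ATau /\ trans M a D).

Definition is_decomp (D : dist) (l : list (R * net)) : Prop :=
  NoDup (map snd l) /\ Forall (fun pm => 0 < fst pm) l /\
  D = dsum (map (fun pm => dscale (fst pm) (dirac (snd pm))) l).

(* lifting of hat-transitions to distributions: each entry (p_i, M_i, o_i)
   with o_i = Some Theta_i iff i in J *)
Definition dhat (a : act) (D T : dist) : Prop :=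
  exists l : list (R * net * option dist),
    is_decomp D (map fst l) /\
    Forall (fun e => match snd e with
                     | Some Ti => hat_step a (snd (fst e)) Ti
                     | None => ~ exists T', hat_step a (snd (fst e)) T'
                     end) l /\
    (exists e, In e l /\ snd e <> None) /\
    T = dsum (map (fun e => match snd e with
                            | Some Ti => dscale (fst (fst e)) Ti
                            | None => dzero
                            end) l).

Inductive tau_star : dist -> dist -> Prop :=
| ts_refl D : tau_star D D
| ts_step D1 D2 D3 : dhat ATau D1 D2 -> tau_star D2 D3 -> tau_star D1 D3.

Definition weak (a : act) (D T : dist) : Prop :=
  (a = ATau /\ tau_star D T) \/
  (a <> ATau /\ exists D1 D2, tau_star D D1 /\ dhat a D1 D2 /\ tau_star D2 T).

Definition mass_is (D : dist) (r : R) : Prop :=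
  exists l, is_decomp D l /\ r = fold_right Rplus 0 (map fst l).

Definition matching (D T : dist) (w : list (net * net * R)) : Prop :=
  Forall (fun e => 0 <= snd e) w /\
  D = dsum (map (fun e => dscale (snd e) (dirac (fst (fst e)))) w) /\
  T = dsum (map (fun e => dscale (snd e) (dirac (snd (fst e)))) w).

Definition mcost (d : net -> net -> R) (w : list (net * net * R)) : R :=
  fold_right Rplus 0 (map (fun e => snd e * d (fst (fst e)) (snd (fst e))) w).

Definition kant (d : net -> net -> R) (D T : dist) (k : R) : Prop :=
  (exists w, matching D T w /\ mcost d w = k) /\
  (forall w, matching D T w -> k <= mcost d w).

Definition pseudoquasimetric (d : net -> net -> R) : Prop :=
  (forall M N, 0 <= d M N <= 1) /\
  (forall M, d M M = 0) /\
  (forall M N O, d M O <= d M N + d N O).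

Definition weak_sim_quasimetric (d : net -> net -> R) : Prop :=
  pseudoquasimetric d /\
  forall M N a D,
    d M N < 1 -> is_alpha a -> trans M a D ->
    exists T r k,
      weak a (dirac N) T /\ mass_is T r /\
      kant d D (dadd T (dscale (1 - r) (dirac NBot))) k /\ k <= d M N.

Definition least_wsq (m : net -> net -> R) : Prop :=
  weak_sim_quasimetric m /\
  forall d, weak_sim_quasimetric d -> forall M N, m M N <= d M N.

Definition sqsub (m : net -> net -> R) (p : R) (M N : net) : Prop := m M N <= p.

From Stdlib Require Import Reals Lra.
Open Scope R_scope.

Lemma pseudoquasimetric_sqsub_trans (d : net -> net -> R) (M N O : net) (p q : R) :
  pseudoquasimetric d -> sqsub d p M N -> sqsub d q N O ->
  sqsub d (Rmin 1 (p + q)) M O.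
Proof.
  intros [d_bounded [_ d_triangle]] dMN dNO; unfold sqsub in *.
  specialize (d_bounded M O); specialize (d_triangle M N O).
  apply Rmin_case; lra.
Qed.

Theorem proposition2p10 :
  forall (m : net -> net -> R), least_wsq m ->
  forall (M N O : net) (p q : R),
    0 <= p <= 1 -> 0 <= q <= 1 ->
    sqsub m p M N -> sqsub m q N O ->
    sqsub m (Rmin 1 (p + q)) M O.
Proof.
  intros m [[m_pqm _] _] M N O p q _ _.
  exact (pseudoquasimetric_sqsub_trans m M N O p q m_pqm).
Qed.
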